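(* Let $M$ be a nonderogatory $d\times d$ complex matrix with minimal polynomial $\mathbf p$, and let $\mathbf p_+,\mathbf p_-,\boldsymbol\chi\in\mathbb C[X]$ be such that $\mathbf p_+\mathbf p_-$ divides $\mathbf p$ and $\boldsymbol\chi$ is relatively prime to $\mathbf p$. Then $\mathfrak B(\mathbf p_+,\mathbf p_-,\boldsymbol\chi)$ is a commutative algebra of block Toeplitz matrices (a linear subspace of $\mathcal T_{n,d}$ closed under multiplication and commutative).
   Context: A nonderogatory matrix is one whose minimal polynomial equals its characteristic polynomial; $\mathcal P(M)$ denotes the algebra of polynomials in $M$. With $\mathbf q=\mathbf p/(\mathbf p_+\mathbf p_-)$, $\mathfrak B(\mathbf p_+,\mathbf p_-,\boldsymbol\chi)$ is the set of $n\times n$ block Toeplitz matrices $A=(A_{i-j})_{i,j=0}^{n-1}$ such that (a) $A_i\in\mathcal P(M)$ for all $-(n-1)\le i\le n-1$; (b)–(c) for each $i=1,\dots,n-1$ there exist polynomials $\mathbf a_i,\mathbf a_{i-n}\in\mathbb C[X]$ with $A_i=\mathbf p_+(M)\mathbf a_i(M)$, $A_{i-n}=\mathbf p_-(M)\mathbf a_{i-n}(M)$, and $\mathbf q$ divides $\mathbf a_i-\boldsymbol\chi\,\mathbf a_{i-n}$. *)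

From HB Require Import structures.
From mathcomp Require Import all_boot all_order all_algebra.
Set Implicit Arguments. Unset Strict Implicit. Unset Printing Implicit Defensive.
Import Order.TTheory GRing.Theory Num.Theory.
Local Open Scope ring_scope.

Definition nonderogatory (F : fieldType) (d : nat) (M : 'M[F]_d.+1) : Prop :=
  mxminpoly M = char_poly M.

Definition inPM (F : fieldType) (d : nat) (M : 'M[F]_d.+1) (X : 'M[F]_d.+1) : Prop :=
  exists a : {poly F}, X = horner_mx M a.

(* The n x n block Toeplitz matrix (A_{i-j})_{i,j=0}^{n-1} with m x m blocks,
   built from the symbol A : int -> 'M_m (only the values at
   -(n-1) .. n-1 are used). *)
Definition btoep (F : fieldType) (n m : nat) (A : int -> 'M[F]_m)
  : 'M[F]_(\sum_(i < n) m) :=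
  @mxblock F n n (fun _ => m) (fun _ => m)
    (fun i j => A ((nat_of_ord i)%:Z - (nat_of_ord j)%:Z)).

Definition frakB (F : fieldType) (d n : nat) (M : 'M[F]_d.+1)
  (pp pm chi : {poly F}) (B : 'M[F]_(\sum_(i < n) d.+1)) : Prop :=
  exists A : int -> 'M[F]_d.+1,
    [/\ B = btoep n A,
        (forall i : int, - (n%:Z - 1) <= i <= n%:Z - 1 -> inPM M (A i)) &
        (forall i : nat, (1 <= i <= n - 1)%N ->
           exists ai ain : {poly F},
             [/\ A i%:Z = horner_mx M pp *m horner_mx M ai,
                 A (i%:Z - n%:Z) = horner_mx M pm *m horner_mx M ain &
                 (mxminpoly M %/ (pp * pm)) %| (ai - chi * ain)])].

From HB Require Import structures.
From mathcomp Require Import all_boot all_order all_algebra.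
From mathcomp Require Import zify ring.
Set Implicit Arguments. Unset Strict Implicit. Unset Printing Implicit Defensive.
Import Order.TTheory GRing.Theory Num.Theory.
Local Open Scope ring_scope.

(* Since every A_i lies in the
   commutative algebra P(M) and p = q (p_+ p_-), condition (c) turns into two
   matrix identities, for 0 < x, y < n:
   - the twisting relation  p_-(M) A_x = chi(M) p_+(M) A_(x - n),
   - the exchange relation  A_x B_(y - n) = A_(x - n) B_y  for admissible A, B.  For products, entry (i, j) of the product of
   two block Toeplitz matrices is a sum over l < n; the exchange relation makes
   it invariant under (i, j) -> (i + 1, j + 1), so the product is block
   Toeplitz, and its symbol is admissible by the twisting relation.  A second
   reindexing, l -> i + j - l (mod n), together with commutativity of P(M)
   and the exchange relation, shows that the product is commutative. *)

Section PolynomialsInM.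
Variables (F : fieldType) (d : nat) (M : 'M[F]_d.+1).

Lemma horner_mxM (a b : {poly F}) :
  horner_mx M a *m horner_mx M b = horner_mx M (a * b).
Proof. by rewrite mulmxE rmorphM. Qed.

Lemma horner_mx_congr (a b : {poly F}) :
  mxminpoly M %| a - b -> horner_mx M a = horner_mx M b.
Proof. by move/mxminpoly_minP/eqP; rewrite rmorphB subr_eq0 => /eqP. Qed.

Lemma inPM0 : inPM M 0.
Proof. by exists 0; rewrite rmorph0. Qed.

Lemma inPMD (X Y : 'M[F]_d.+1) : inPM M X -> inPM M Y -> inPM M (X + Y).
Proof. by move=> [a ->] [b ->]; exists (a + b); rewrite rmorphD. Qed.

Lemma inPMZ (c : F) (X : 'M[F]_d.+1) : inPM M X -> inPM M (c *: X).
Proof. by move=> [a ->]; exists (c *: a); rewrite linearZ. Qed.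

Lemma inPMM (X Y : 'M[F]_d.+1) : inPM M X -> inPM M Y -> inPM M (X *m Y).
Proof. by move=> [a ->] [b ->]; exists (a * b); rewrite horner_mxM. Qed.

Lemma inPM_sum (I : finType) (G : I -> 'M[F]_d.+1) :
  (forall i, inPM M (G i)) -> inPM M (\sum_i G i).
Proof. by move=> PG; apply: (big_ind (inPM M)) => //; [exact: inPM0 | exact: inPMD]. Qed.

Lemma inPM_comm (X Y : 'M[F]_d.+1) : inPM M X -> inPM M Y -> X *m Y = Y *m X.
Proof. by move=> [a ->] [b ->]; rewrite !horner_mxM mulrC. Qed.

Lemma horner_mx_commMl (a : {poly F}) (X Y : 'M[F]_d.+1) :
  inPM M X -> horner_mx M a *m (X *m Y) = X *m (horner_mx M a *m Y).
Proof.
have PA : inPM M (horner_mx M a) by exists a.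
by move=> PX; rewrite !mulmxA (inPM_comm PA PX).
Qed.

Definition pmultiple (r : {poly F}) (X : 'M[F]_d.+1) : Prop :=
  exists c, X = horner_mx M (r * c).

Lemma pmultipleMr (r : {poly F}) (X Y : 'M[F]_d.+1) :
  pmultiple r X -> inPM M Y -> pmultiple r (X *m Y).
Proof. by move=> [a ->] [b ->]; exists (a * b); rewrite horner_mxM mulrA. Qed.

Lemma pmultipleMl (r : {poly F}) (X Y : 'M[F]_d.+1) :
  inPM M X -> pmultiple r Y -> pmultiple r (X *m Y).
Proof. by move=> [a ->] [b ->]; exists (a * b); rewrite horner_mxM mulrCA. Qed.

Lemma pmultiple_sum (r : {poly F}) (I : finType) (G : I -> 'M[F]_d.+1) :
  (forall i, pmultiple r (G i)) -> pmultiple r (\sum_i G i).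
Proof.
move=> PG; apply: (big_ind (pmultiple r)) => //.
- by exists 0; rewrite mulr0 rmorph0.
- by move=> X Y [a ->] [b ->]; exists (a + b); rewrite mulrDr rmorphD.
Qed.

End PolynomialsInM.

Lemma reindex_nat_bij (V : nmodType) (n : nat) (s t : nat -> nat) (G : nat -> V) :
  (forall k, (k < n)%N -> (s k < n)%N) -> (forall k, (k < n)%N -> t (s k) = k) ->
  \sum_(k < n) G (s k) = \sum_(k < n) G k.
Proof.
move=> s_lt tK; pose so (k : 'I_n) : 'I_n := Ordinal (s_lt k (ltn_ord k)).
have so_inj : injective so.
  by move=> k1 k2 /(congr1 val) /= E; apply/val_inj; rewrite /= -[k1 : nat]tK // E tK.
by rewrite [RHS](reindex_inj so_inj).
Qed.

Lemma scale_mxblock (R : pzRingType) p q (p_ : 'I_p -> nat) (q_ : 'I_q -> nat)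
    (c : R) (B_ : forall i j, 'M[R]_(p_ i, q_ j)) :
  c *: mxblock B_ = mxblock (fun i j => c *: B_ i j).
Proof.
apply/mxblockP => i j; rewrite mxblockK; apply/matrixP => r s.
by rewrite !mxE -[in RHS](mxblockK B_) !mxE.
Qed.

Section BlockToeplitz.
Variables (F : fieldType) (n m : nat).

Lemma btoepD (A B : int -> 'M[F]_m) :
  btoep n (fun k => A k + B k) = btoep n A + btoep n B.
Proof. by rewrite /btoep -mxblockD. Qed.

Lemma btoepZ (c : F) (A : int -> 'M[F]_m) :
  btoep n (fun k => c *: A k) = c *: btoep n A.
Proof. by rewrite /btoep scale_mxblock. Qed.

End BlockToeplitz.

Section AdmissibleSymbols.
Variables (F : fieldType) (d n : nat) (M : 'M[F]_d.+1) (pp pm chi : {poly F}).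
Hypothesis ppm_dvd : pp * pm %| mxminpoly M.

Local Notation hM := (horner_mx M).
Local Notation q := (mxminpoly M %/ (pp * pm)).
Local Notation N := n%:Z.

Definition admissible (A : int -> 'M[F]_d.+1) : Prop :=
  (forall i : int, - (N - 1) <= i <= N - 1 -> inPM M (A i)) /\
  (forall i : nat, (1 <= i <= n - 1)%N ->
     exists ai ain : {poly F},
       [/\ A i%:Z = hM pp *m hM ai, A (i%:Z - N) = hM pm *m hM ain &
           q %| ai - chi * ain]).

Lemma frakBP (B : 'M[F]_(\sum_(i < n) d.+1)) :
  @frakB F d n M pp pm chi B <-> exists2 A, B = btoep n A & admissible A.
Proof.
split; first by move=> [A [-> PA cA]]; exists A.
by move=> [A -> [PA cA]]; exists A.
Qed.

(* Since p = q (p_+ p_-), equality at M of two polynomials differing by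
   e (p_+ p_-) amounts to the divisibility of e by q. *)
Lemma horner_mx_eq_q (x y e : {poly F}) :
  x - y = e * (pp * pm) -> hM x = hM y <-> q %| e.
Proof.
move=> Exy; have ppm_neq0 : pp * pm != 0.
  apply: contraTneq ppm_dvd => ->; rewrite dvd0p.
  exact: monic_neq0 (mxminpoly_monic M).
rewrite -(dvdp_mul2r _ _ ppm_neq0) divpK // -Exy.
split=> [/eqP|/horner_mx_congr //]; rewrite -subr_eq0 -rmorphB => /eqP.
exact: mxminpoly_min.
Qed.

Section OneSymbol.
Variable A : int -> 'M[F]_d.+1.
Hypothesis admA : admissible A.

Lemma admissible_inPM (i : int) : - (N - 1) <= i <= N - 1 -> inPM M (A i).
Proof. by case: admA => PA _; apply: PA. Qed.

Lemma admissible_split (x : int) : 0 < x < N ->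
  exists a b, [/\ A x = hM (pp * a), A (x - N) = hM (pm * b) & q %| a - chi * b].
Proof.
case: admA => _ cA; case: x => [x|x] x_bd; last by lia.
have [|a [b [Ea Eb qab]]] := cA x; first by lia.
by exists a, b; rewrite -!horner_mxM.
Qed.

Lemma admissible_twist (x : int) : 0 < x < N ->
  hM pm *m A x = hM (chi * pp) *m A (x - N).
Proof.
move=> /admissible_split [a [b [-> -> qab]]]; rewrite !horner_mxM.
by apply/(horner_mx_eq_q (e := a - chi * b)) => //; ring.
Qed.

Lemma admissible_pp (x : int) : 0 < x < N -> pmultiple M pp (A x).
Proof. by move=> /admissible_split [a [b [-> _ _]]]; exists a. Qed.

Lemma admissible_pm (x x' : int) : 0 < x < N -> x' = x - N -> pmultiple M pm (A x').
Proof. by move=> /admissible_split [a [b [_ Eb _]]] ->; exists b. Qed.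

End OneSymbol.

Lemma admissibleD (A B : int -> 'M[F]_d.+1) :
  admissible A -> admissible B -> admissible (fun k => A k + B k).
Proof.
move=> [PA cA] [PB cB]; split=> [k k_bd | i i_bd].
  by apply: inPMD; [apply: PA | apply: PB].
have [a [b [Ea Eb qab]]] := cA i i_bd; have [a' [b' [Ea' Eb' qab']]] := cB i i_bd.
exists (a + a'), (b + b'); rewrite !rmorphD !mulmxDr Ea Eb Ea' Eb'; split=> //.
have -> : a + a' - chi * (b + b') = (a - chi * b) + (a' - chi * b') by ring.
exact: dvdp_add.
Qed.

Lemma admissibleZ (c : F) (A : int -> 'M[F]_d.+1) :
  admissible A -> admissible (fun k => c *: A k).
Proof.
move=> [PA cA]; split=> [k k_bd | i /cA [a [b [Ea Eb qab]]]].
  by apply: inPMZ; apply: PA.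
exists (c *: a), (c *: b); rewrite !linearZ /= Ea Eb; split=> //.
have -> : c *: a - chi * (c *: b) = c%:P * (a - chi * b) by rewrite -!mul_polyC; ring.
exact: dvdp_mull.
Qed.

Lemma frakB0 : @frakB F d n M pp pm chi 0.
Proof.
apply/frakBP; exists (fun=> 0); first by rewrite /btoep mxblock0.
split=> [i _ | i _]; first exact: inPM0.
by exists 0, 0; split; rewrite ?rmorph0 ?mulmx0 ?mulr0 ?subr0 ?dvdp0.
Qed.

Lemma frakBD (B1 B2 : 'M[F]_(\sum_(i < n) d.+1)) :
  @frakB F d n M pp pm chi B1 -> @frakB F d n M pp pm chi B2 ->
  @frakB F d n M pp pm chi (B1 + B2).
Proof.
move=> /frakBP [A1 -> adm1] /frakBP [A2 -> adm2]; apply/frakBP.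
by exists (fun k => A1 k + A2 k); [rewrite btoepD | exact: admissibleD].
Qed.

Lemma frakBZ (c : F) (B : 'M[F]_(\sum_(i < n) d.+1)) :
  @frakB F d n M pp pm chi B -> @frakB F d n M pp pm chi (c *: B).
Proof.
move=> /frakBP [A -> admA]; apply/frakBP.
by exists (fun k => c *: A k); [rewrite btoepZ | exact: admissibleZ].
Qed.

Definition prod_entry (A B : int -> 'M[F]_d.+1) (i j : nat) : 'M[F]_d.+1 :=
  \sum_(l < n) A (i%:Z - l%:Z) *m B (l%:Z - j%:Z).

Definition prod_symbol (A B : int -> 'M[F]_d.+1) (k : int) : 'M[F]_d.+1 :=
  if 0 <= k then prod_entry A B `|k|%N 0 else prod_entry A B 0 `|k|%N.

Section TwoSymbols.
Variables A B : int -> 'M[F]_d.+1.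
Hypotheses (admA : admissible A) (admB : admissible B).

Lemma admissible_exchange (x y x' y' : int) : 0 < x < N -> 0 < y < N ->
  x' = x - N -> y' = y - N -> A x *m B y' = A x' *m B y.
Proof.
move=> /(admissible_split admA) [a [b [Ea Eb qab]]].
move=> /(admissible_split admB) [a' [b' [Ea' Eb' qab']]] -> ->.
rewrite Ea Eb Ea' Eb' !horner_mxM.
apply/(horner_mx_eq_q (e := (a - chi * b) * b' - b * (a' - chi * b'))); first by ring.
by apply: dvdp_sub; [exact: dvdp_mulr | exact: dvdp_mull].
Qed.

Lemma symbols_commute (x y : int) :
  - (N - 1) <= x <= N - 1 -> - (N - 1) <= y <= N - 1 -> A x *m B y = B y *m A x.
Proof.
move=> x_bd y_bd.
by apply: inPM_comm; [apply: (admissible_inPM admA) | apply: (admissible_inPM admB)].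
Qed.

Local Notation entry := (prod_entry A B).
Local Notation symbol := (prod_symbol A B).

(* Shift invariance of the product: the term dropped at one end of the sum
   is traded, by the exchange relation, for the term added at the other. *)
Lemma prod_entry_shift (i j : nat) : (i.+1 < n)%N -> (j.+1 < n)%N ->
  entry i.+1 j.+1 = entry i j.
Proof.
move=> lt_i lt_j; have [m En] : exists m, n = m.+1 by exists n.-1; lia.
rewrite /prod_entry En big_ord_recl big_ord_recr [X in _ = X]addrC.
congr (_ + _); first by apply: admissible_exchange => /=; lia.
by apply: eq_bigr => l _; rewrite lift0 /=; congr (A _ *m B _); lia.
Qed.

Lemma prod_entry_toeplitz (i j : nat) : (i < n)%N -> (j < n)%N ->
  entry i j = symbol (i%:Z - j%:Z).
Proof.
have shift t : forall i j, (i + t < n)%N -> (j + t < n)%N ->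
    entry (i + t) (j + t) = entry i j.
  elim: t => [|t IHt] i' j' lt_i lt_j; first by rewrite !addn0.
  by rewrite !addnS prod_entry_shift ?IHt //; lia.
move=> lt_i lt_j; rewrite /prod_symbol; case: leP => [le_ji | lt_ij].
  have -> : `|i%:Z - j%:Z|%N = (i - j)%N by lia.
  have := shift j (i - j)%N 0%N ltac:(lia) ltac:(lia).
  by rewrite add0n subnK //; lia.
have -> : `|i%:Z - j%:Z|%N = (j - i)%N by lia.
have := shift i 0%N (j - i)%N ltac:(lia) ltac:(lia).
by rewrite add0n subnK //; lia.
Qed.

Lemma btoep_mul : btoep n A *m btoep n B = btoep n symbol.
Proof.
rewrite /btoep mul_mxblock; apply: eq_mxblock => i j.
exact: prod_entry_toeplitz (ltn_ord i) (ltn_ord j).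
Qed.

Lemma prod_entry_inPM (i j : nat) : (i < n)%N -> (j < n)%N -> inPM M (entry i j).
Proof.
move=> lt_i lt_j; apply: inPM_sum => l; have := ltn_ord l => lt_l.
by apply: inPMM; [apply: (admissible_inPM admA) | apply: (admissible_inPM admB)]; lia.
Qed.

(* Condition (b) for the product: each term of prod_symbol at 0 < i < n has a
   factor A_x or B_x with 0 < x < n, and symmetrically at i - n. *)
Lemma prod_symbol_pp (i : nat) : (1 <= i <= n - 1)%N -> pmultiple M pp (symbol i%:Z).
Proof.
move=> i_bd; rewrite /prod_symbol /=; apply: pmultiple_sum => l.
have := ltn_ord l; case: (posnP l) => [l0 | l_gt0] lt_l.
  by apply: pmultipleMr; [apply: (admissible_pp admA) | apply: (admissible_inPM admB)]; lia.
by apply: pmultipleMl; [apply: (admissible_inPM admA) | apply: (admissible_pp admB)]; lia.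
Qed.

Lemma prod_symbol_pm (i : nat) : (1 <= i <= n - 1)%N ->
  pmultiple M pm (symbol (i%:Z - N)).
Proof.
move=> i_bd; rewrite /prod_symbol.
have -> : (0 <= i%:Z - N) = false by lia.
apply: pmultiple_sum => l; have := ltn_ord l; case: (posnP l) => [l0 | l_gt0] lt_l.
  apply: pmultipleMl; first by apply: (admissible_inPM admA); lia.
  by apply: (admissible_pm admB (x := i%:Z)); lia.
apply: pmultipleMr; last by apply: (admissible_inPM admB); lia.
by apply: (admissible_pm admA (x := N - l%:Z)); lia.
Qed.

(* The twisting relation for the product: rotating the index of summation by
   i, each term is twisted through its factor of index in (0, n). *)
Lemma prod_symbol_twist (i : nat) : (1 <= i <= n - 1)%N ->
  hM pm *m symbol i%:Z = hM (chi * pp) *m symbol (i%:Z - N).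
Proof.
move=> i_bd; rewrite /prod_symbol /=.
have -> : (0 <= i%:Z - N) = false by lia.
have -> : `|i%:Z - N|%N = (n - i)%N by lia.
pose s l := if (i <= l)%N then (l - i)%N else (l + n - i)%N.
pose t l := if (l + i < n)%N then (l + i)%N else (l + i - n)%N.
rewrite /prod_entry !mulmx_sumr -[RHS](reindex_nat_bij (n := n) (s := s) (t := t)
  (fun l => hM (chi * pp) *m (A (0%:Z - l%:Z) *m B (l%:Z - (n - i)%:Z)))); last 2 first.
- by move=> l lt_l; rewrite /s; case: (leqP i l); lia.
- by move=> l lt_l; rewrite /s /t; case: (leqP i l) => ?; case: ifP => ?; lia.
apply: eq_bigr => l _; have := ltn_ord l; rewrite /s; case: (leqP i l) => [le_il | lt_li] lt_l.
  rewrite horner_mx_commMl; last by apply: (admissible_inPM admA); lia.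
  rewrite (admissible_twist admB); last by lia.
  rewrite -horner_mx_commMl; last by apply: (admissible_inPM admA); lia.
  by congr (_ *m (A _ *m B _)); lia.
rewrite mulmxA (admissible_twist admA); last by lia.
by rewrite -mulmxA; congr (_ *m (A _ *m B _)); lia.
Qed.

(* The product symbol is again admissible: (a) by closure of P(M), (b) by the
   two lemmas above, and (c) from the twisting relation, since
   p = q (p_+ p_-). *)
Lemma prod_symbol_admissible : admissible symbol.
Proof.
split=> [k k_bd | i i_bd].
  by rewrite /prod_symbol; case: ifP => _; apply: prod_entry_inPM; lia.
have [c Ec] := prod_symbol_pp i_bd; have [c' Ec'] := prod_symbol_pm i_bd.
exists c, c'; split; rewrite ?Ec ?Ec' ?horner_mxM //.
apply/(horner_mx_eq_q (x := pm * (pp * c)) (y := chi * pp * (pm * c'))); first by ring.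
by rewrite -[hM (pm * _)]horner_mxM -[hM (chi * pp * _)]horner_mxM -Ec -Ec' prod_symbol_twist.
Qed.

(* Commutativity of the product: reflecting the index of summation
   l -> i + j - l (mod n) pairs each term of A B with a term of B A, up to
   commutation in P(M) and, for wrapped indices, the exchange relation. *)
Lemma prod_entry_comm (i j : nat) : (i < n)%N -> (j < n)%N ->
  entry i j = prod_entry B A i j.
Proof.
move=> lt_i lt_j.
pose s l := if (l <= i + j)%N then if (i + j - l < n)%N then (i + j - l)%N
            else (i + j - l - n)%N else (i + j + n - l)%N.
rewrite /prod_entry -[RHS](reindex_nat_bij (n := n) (s := s) (t := s)
  (fun l => B (i%:Z - l%:Z) *m A (l%:Z - j%:Z))); last 2 first.
- by move=> l lt_l; rewrite /s; case: (leqP l (i + j)) => ?; [case: ifP => ?|]; lia.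
- move=> l lt_l; rewrite /s; case: (leqP l (i + j)) => ?.
    case: (ltnP (i + j - l) n) => ?.
      by case: (leqP (i + j - l) (i + j)) => ?; [case: ifP => ?|]; lia.
    by case: (leqP (i + j - l - n) (i + j)) => ?; [case: ifP => ?|]; lia.
  by case: (leqP (i + j + n - l) (i + j)) => ?; lia.
apply: eq_bigr => l _; have := ltn_ord l; rewrite /s => lt_l.
case: (leqP l (i + j)) => [le_l | lt_l']; [case: (ltnP (i + j - l) n) => [lt_n | le_n] |].
- by rewrite symbols_commute; [congr (B _ *m A _) | ..]; lia.
- rewrite (admissible_exchange (x' := i%:Z - l%:Z - N) (y := l%:Z - j%:Z + N)); [|lia..].
  by rewrite symbols_commute; [congr (B _ *m A _) | ..]; lia.
- rewrite -(admissible_exchange (x := i%:Z - l%:Z + N) (y' := l%:Z - j%:Z - N)); [|lia..].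
  by rewrite symbols_commute; [congr (B _ *m A _) | ..]; lia.
Qed.

End TwoSymbols.

Lemma frakBM (B1 B2 : 'M[F]_(\sum_(i < n) d.+1)) :
  @frakB F d n M pp pm chi B1 -> @frakB F d n M pp pm chi B2 ->
  @frakB F d n M pp pm chi (B1 *m B2).
Proof.
move=> /frakBP [A1 -> adm1] /frakBP [A2 -> adm2]; apply/frakBP.
exists (prod_symbol A1 A2); first exact: btoep_mul.
exact: prod_symbol_admissible.
Qed.

Lemma frakB_comm (B1 B2 : 'M[F]_(\sum_(i < n) d.+1)) :
  @frakB F d n M pp pm chi B1 -> @frakB F d n M pp pm chi B2 ->
  B1 *m B2 = B2 *m B1.
Proof.
move=> /frakBP [A1 -> adm1] /frakBP [A2 -> adm2].
rewrite /btoep !mul_mxblock; apply: eq_mxblock => i j.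
exact: prod_entry_comm (ltn_ord i) (ltn_ord j).
Qed.

End AdmissibleSymbols.

Theorem theorem6p2 (F : numClosedFieldType) (d n : nat) (M : 'M[F]_d.+1)
    (pp pm chi : {poly F}) :
  nonderogatory M ->
  pp * pm %| mxminpoly M ->
  coprimep chi (mxminpoly M) ->
  [/\ @frakB F d n M pp pm chi 0,
      (forall B1 B2, @frakB F d n M pp pm chi B1 -> @frakB F d n M pp pm chi B2 ->
         @frakB F d n M pp pm chi (B1 + B2)),
      (forall (c : F) B, @frakB F d n M pp pm chi B -> @frakB F d n M pp pm chi (c *: B)),
      (forall B1 B2, @frakB F d n M pp pm chi B1 -> @frakB F d n M pp pm chi B2 ->
         @frakB F d n M pp pm chi (B1 *m B2)) &
      (forall B1 B2, @frakB F d n M pp pm chi B1 -> @frakB F d n M pp pm chi B2 ->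
         B1 *m B2 = B2 *m B1)].
Proof.
move=> _ ppm_dvd _; split.
- exact: frakB0.
- exact: frakBD.
- exact: frakBZ.
- exact: frakBM.
- exact: frakB_comm.
Qed.
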